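(* There exists a constant $C_1>0$ such that $$\mathcal J(v)\ge C_1\|v\|_{W_2^1(\mathcal T)}^2\qquad\text{for all } v\in\mathcal W.$$
   Context: Tree setup. Let $\mathcal T$ be a compact rooted tree with edges $e_j=[v_{k_j},v_j]$, $j=1,\dots,m$. Here $k_1=0$, $k_j\in\{1,\dots,d\}$ for $j\ge2$, and iterating $k$ from any $j$ reaches $0$. The root is $v_0$, internal vertices are $v_1,\dots,v_d$, and boundary vertices are $v_{d+1},\dots,v_m$. Edge $e_j$ has length $T_j$ and is parametrized by $[0,T_j]$ from $v_{k_j}$ to $v_j$. Fix $\tau\ge0$ with $\tau<T_j$ for all $j$. Spaces. Set $W_2^1(\mathcal T_\tau):=W_2^1[-\tau,T_1]\oplus\bigoplus_{j\ge2}W_2^1[0,T_j]$ and $W_2^1(\mathcal T):=\bigoplus_jW_2^1[0,T_j]$. $\mathcal W$ is the subspace of $W_2^1(\mathcal T_\tau)$ of all real tuples $v$ satisfying: - $v_j(0)=v_{k_j}(T_{k_j})$ for $j\ge2$; - $v_j=0$ on $[T_j-\tau,T_j]$ for $j>d$; - $v_1=0$ on $[-\tau,0]$. It is regarded as a subspace of $W_2^1(\mathcal T)$ by restriction. Operators. Fix real $b_j,c_j$. Define $$\ell_jv(t)=v_j'(t)+b_jv_j(t)+c_jv_j(t-\tau),\qquad 0<t<T_j,$$ where for $j\ge2$ and $0<t<\tau$ the term $v_j(t-\tau)$ means $v_{k_j}(t-\tau+T_{k_j})$, and for $j=1$ it uses $v_1$ on $[-\tau,0]$. Set $$\mathcal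 J(v)=\sum_{j=1}^m\int_0^{T_j}(\ell_jv(t))^2\,dt.$$ *)

From HB Require Import structures.
From mathcomp Require Import all_boot all_order all_algebra.
From mathcomp Require Import all_classical all_reals all_analysis.
Set Implicit Arguments. Unset Strict Implicit. Unset Printing Implicit Defensive.
Import Order.TTheory GRing.Theory Num.Theory.
Local Open Scope classical_set_scope.
Local Open Scope ring_scope.

Section Defs.
Variable R : realType.
Local Notation mu := (@lebesgue_measure R).

(* g is a (weak) derivative of f on [a,b] in the W_2^1 sense:
   g is square integrable on [a,b] and f is the primitive of g. *)
Definition weak_deriv (a b : R) (f g : R -> R) : Prop :=
  measurable_fun `[a, b] g /\
  mu.-integrable `[a, b] (EFin \o g) /\
  (\int[mu]_(x in `[a, b]) ((g x) ^+ 2)%:E < +oo)%E /\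
  (forall x, a <= x <= b -> f x = f a + \int[mu]_(t in `[a, x]) g t).

Definition W21 (a b : R) (f : R -> R) : Prop := exists g, weak_deriv a b f g.

(* Rooted tree data: edges e_j = [v_{k j}, v_j], j = 1..m; vertices v_0 (root),
   v_1..v_d internal, v_{d+1}..v_m boundary. *)
Definition tree_data (m d : nat) (k : nat -> nat) : Prop :=
  (1 <= m)%N /\
  k 1%N = 0%N /\
  (forall j, (2 <= j <= m)%N -> (1 <= k j <= d)%N) /\
  (forall j, (1 <= j <= m)%N -> exists n, iter n k j = 0%N) /\
  (forall i, (1 <= i <= d)%N -> exists j, (1 <= j <= m)%N /\ k j = i).

Definition in_W (m d : nat) (k : nat -> nat) (T : nat -> R) (tau : R)
    (v : nat -> R -> R) : Prop :=
  W21 (- tau) (T 1%N) (v 1%N) /\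
  (forall j, (2 <= j <= m)%N -> W21 0 (T j) (v j)) /\
  (forall j, (2 <= j <= m)%N -> v j 0 = v (k j) (T (k j))) /\
  (forall j, (d < j <= m)%N -> forall t, T j - tau <= t <= T j -> v j t = 0) /\
  (forall t, - tau <= t <= 0 -> v 1%N t = 0).

(* delayed value v_j(t - tau), continued onto the parent edge for j >= 2 *)
Definition delayed (k : nat -> nat) (T : nat -> R) (tau : R)
    (v : nat -> R -> R) (j : nat) (t : R) : R :=
  if (t - tau < 0) && (j != 1%N) then v (k j) (t - tau + T (k j))
  else v j (t - tau).

Definition ell (k : nat -> nat) (T : nat -> R) (tau : R) (b c : nat -> R)
    (v g : nat -> R -> R) (j : nat) (t : R) : R :=
  g j t + b j * v j t + c j * delayed k T tau v j t.

Definition Jfun (m : nat) (k : nat -> nat) (T : nat -> R) (tau : R)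
    (b c : nat -> R) (v g : nat -> R -> R) : \bar R :=
  (\sum_(1 <= j < m.+1)
     \int[mu]_(t in `[0%R, T j]%classic) ((ell k T tau b c v g j t) ^+ 2)%:E)%E.

Definition normW2 (m : nat) (T : nat -> R) (v g : nat -> R -> R) : \bar R :=
  (\sum_(1 <= j < m.+1)
     \int[mu]_(t in `[0%R, T j]%classic) ((v j t) ^+ 2 + (g j t) ^+ 2)%:E)%E.

End Defs.

From HB Require Import structures.
From mathcomp Require Import all_boot all_order all_algebra.
From mathcomp Require Import all_classical all_reals all_analysis.
From mathcomp Require Import ring lra measurable_realfun.
Import Order.TTheory GRing.Theory Num.Theory.
Import numFieldNormedType.Exports.
Set Implicit Arguments. Unset Strict Implicit. Unset Printing Implicit Defensive.
Local Open Scope classical_set_scope.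
Local Open Scope ring_scope.

(** On a single edge, if u(0) is bounded by P, the delayed term is either bounded
    by P or a past value of u, and the residual u' + b u + c w has L^2 norm at
    most s, then sup |u| <= K (s + P): on a window of length h with
    h (|b| + |c|) <= 1/2 the residual controls the growth of the maximum of |u|,
    and there are finitely many windows.  Starting from v_1 = 0 on [-tau, 0] and
    passing the bound from each edge to its children, J(v) <= s^2 gives
    sup |v_j| <= E s on the whole tree.  Then |v_j'| <= |l_j v| + (|b_j| + |c_j|) E s
    gives ||v||^2 <= 2 J(v) + Z s^2 for every s^2 >= J(v), hence
    ||v||^2 <= (2 + Z) J(v). *)

Section Interval.
Variable R : realType.
Local Notation mu := (@lebesgue_measure R).

Lemma weak_deriv_continuous (a b : R) (u g : R -> R) : a <= b ->
  weak_deriv a b u g -> {within `[a, b], continuous u}.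
Proof.
move=> ab [_ [ig [_ hu]]].
have hc : {within `[a, b], continuous
    (fun x => u a + parameterized_integral mu a x g)}.
  move=> x; apply: cvgD; first exact: cvg_cst.
  exact: parameterized_integral_continuous.
apply: subspace_eq_continuous hc => x; rewrite inE /= in_itv /= => xab.
exact: (esym (hu x xab)).
Qed.

Lemma weak_deriv_measurable (a b : R) (u g : R -> R) : a <= b ->
  weak_deriv a b u g -> measurable_fun `[a, b] u.
Proof.
move=> ab h; apply: subspace_continuous_measurable_fun => //.
exact: weak_deriv_continuous h.
Qed.

Lemma weak_deriv_increment (a b x y : R) (u g : R -> R) :
  weak_deriv a b u g -> a <= x -> x <= y -> y <= b ->
  u y - u x = \int[mu]_(t in `[x, y]) g t.
Proof.
move=> [_ [ig [_ hu]]] ax xy yb.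
have iy : mu.-integrable `[a, y] (EFin \o g).
  by apply: integrableS ig => //; apply: subset_itvl; rewrite bnd_simp.
rewrite (hu y) ?(le_trans ax xy) ?yb // (hu x) ?ax ?(le_trans xy yb) //.
rewrite opprD addrACA subrr add0r.
rewrite (@Rintegral_itvB R g (BLeft a) (BRight y) x) ?bnd_simp //.
rewrite Rintegral_itv_obnd_cbnd //.
by apply: integrableS iy => //; apply: subset_itvr; rewrite bnd_simp.
Qed.

Lemma lebesgue_measure_itv_cc (a x : R) : a <= x ->
  mu (`[a, x]%classic : set R) = (x - a)%:E.
Proof.
move=> ax; rewrite lebesgue_measure_itv /= lte_fin.
case: ltP => [_|xa]; first by rewrite EFinB.
have -> : x = a by apply/eqP; rewrite eq_le ax xa.
by rewrite subrr.
Qed.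

Lemma norm_le_sqr_div (x s : R) : 0 < s -> `|x| <= x ^+ 2 / (2 * s) + s / 2.
Proof.
move=> s0; have s2 : 0 < 2 * s by rewrite mulr_gt0.
rewrite -(ler_pM2r s2) [leRHS]mulrDl divfK ?gt_eqF //.
have -> : s / 2 * (2 * s) = s ^+ 2 by field.
rewrite -[x ^+ 2]real_normK ?num_real //.
have := sqr_ge0 (`|x| - s); nra.
Qed.

Lemma Rintegral_norm_le_sqr_bound (a x s L : R) (f g : R -> R) :
  a <= x -> 0 < s -> 0 <= L ->
  mu.-integrable `[a, x] (EFin \o g) -> measurable_fun `[a, x] f ->
  (\int[mu]_(y in `[a, x]) ((f y) ^+ 2)%:E <= (s ^+ 2)%:E)%E ->
  (forall y, a <= y <= x -> `|g y| <= `|f y| + L) ->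
  \int[mu]_(y in `[a, x]) `|g y| <= s / 2 + (s / 2 + L) * (x - a).
Proof.
move=> ax s0 L0 ig mf hf hg.
have mi : measurable `[a, x] by exact: measurable_itv.
have mg : measurable_fun `[a, x] g by apply/measurable_EFinP; case/integrableP: ig.
have fin : (\int[mu]_(y in `[a, x]) (`|g y|)%:E)%E \is a fin_num.
  rewrite ge0_fin_numE; last by apply: integral_ge0 => y _; rewrite lee_fin.
  by case/integrableP: ig.
set k := (2 * s)^-1.
have k0 : 0 <= k by rewrite invr_ge0 mulr_ge0 // ltW.
have mf2 : measurable_fun `[a, x] (fun y => ((f y) ^+ 2)%:E).
  by apply/measurable_EFinP; exact: measurable_funX.
have f20 y : `[a, x]%classic y -> (0 <= ((f y) ^+ 2)%:E)%E.
  by rewrite lee_fin sqr_ge0.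
have ksq0 y : `[a, x]%classic y -> (0 <= (k * f y ^+ 2)%:E)%E.
  by rewrite lee_fin mulr_ge0 // sqr_ge0.
have mksq : measurable_fun `[a, x] (fun y => (k * f y ^+ 2)%:E).
  by apply/measurable_EFinP; apply: measurable_funM => //; exact: measurable_funX.
have cst0 y : `[a, x]%classic y -> (0 <= (cst (s / 2 + L)%:E) y)%E.
  by rewrite lee_fin addr_ge0 // divr_ge0 // ltW.
rewrite /Rintegral -lee_fin fineK //.
apply: (@le_trans _ _ (\int[mu]_(y in `[a, x]) ((k * f y ^+ 2)%:E
    + cst (s / 2 + L)%:E y))%E).
  apply: ge0_le_integral => //.
  - by apply/measurable_EFinP; exact: measurableT_comp mg.
  - exact: emeasurable_funD.
  move=> y; rewrite /= in_itv /= => ayx; rewrite -EFinD lee_fin.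
  apply: le_trans (hg y ayx) _; rewrite addrA lerD2r.
  by rewrite mulrC; exact: norm_le_sqr_div.
rewrite (ge0_integralD mu mi ksq0 mksq cst0 (measurable_cst _)).
have -> : (\int[mu]_(y in `[a, x]) (k * f y ^+ 2)%:E
    = k%:E * \int[mu]_(y in `[a, x]) (f y ^+ 2)%:E)%E.
  by rewrite -ge0_integralZl_EFin //; apply: eq_integral => y _; rewrite EFinM.
rewrite integral_cst //.
have -> : ((s / 2 + L)%:E * mu (`[a, x]%classic : set R)
    = ((s / 2 + L) * (x - a))%:E)%E.
  by rewrite EFinM; congr (_ * _)%E; exact: lebesgue_measure_itv_cc.
rewrite EFinD; apply: leeD2r.
apply: (le_trans (lee_wpmul2l _ hf)); first by rewrite lee_fin.
rewrite -EFinM lee_fin (_ : k * s ^+ 2 = s / 2) //.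
by rewrite /k; field; rewrite gt_eqF.
Qed.

End Interval.

Lemma norm_le_residual (R : realDomainType) (x y z b c : R) :
  `|x| <= `|x + b * y + c * z| + `|b| * `|y| + `|c| * `|z|.
Proof.
set r := x + b * y + c * z; have -> : x = r - b * y - c * z by rewrite /r; ring.
rewrite -!normrM; apply: le_trans (ler_normB _ _) _.
by rewrite lerD2r ler_normB.
Qed.

Section EdgeStep.
Variables (R : realType) (T b c : R) (u g w : R -> R) (s P h : R).
Local Notation mu := (@lebesgue_measure R).
Let res y := g y + b * u y + c * w y.

Hypotheses (T0 : 0 <= T) (ug : weak_deriv 0 T u g).
Hypothesis res_measurable : measurable_fun `[0, T] res.
Hypothesis res_sq :
  (\int[mu]_(y in `[0%R, T]%classic) ((res y) ^+ 2)%:E <= (s ^+ 2)%:E)%E.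
Hypothesis w_delayed : forall t, 0 <= t <= T ->
  `|w t| <= P \/ exists2 t', 0 <= t' <= t & w t = u t'.

Lemma increment_le_residual (a x L : R) : 0 < s -> 0 <= a -> a <= x ->
  x <= T -> 0 <= L -> (forall y, a <= y <= x -> `|g y| <= `|res y| + L) ->
  `|u x - u a| <= s / 2 + (s / 2 + L) * (x - a).
Proof.
move=> s0 a0 ax xT L0 hg.
have sub : `[a, x] `<=` `[0, T] by apply: subset_itv; rewrite bnd_simp.
have ig : mu.-integrable `[a, x] (EFin \o g).
  by case: ug => _ [ig _]; exact: integrableS ig.
rewrite (weak_deriv_increment ug) //.
apply: le_trans (le_normr_Rintegral _ _) _ => //.
have mres : measurable_fun `[a, x] res by exact: measurable_funS res_measurable.
apply: (Rintegral_norm_le_sqr_bound _ _ _ _ mres _ hg) => //.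
apply: le_trans res_sq.
apply: ge0_subset_integral => //.
- by apply/measurable_EFinP; exact: measurable_funX.
- by move=> y _; rewrite lee_fin sqr_ge0.
Qed.

Lemma deriv_le_residual (t S : R) : 0 <= P -> t <= T ->
  (forall y, 0 <= y <= t -> `|u y| <= S) ->
  forall y, 0 <= y <= t -> `|g y| <= `|res y| + (`|b| + `|c|) * (S + P).
Proof.
move=> P0 tT uS y /andP[y0 yt].
have uy : `|u y| <= S by apply: uS; rewrite y0 yt.
have wy : `|w y| <= S + P.
  have yT : 0 <= y <= T by rewrite y0 (le_trans yt tT).
  have [wP|[y' /andP[y'0 y'y] ->]] := w_delayed yT.
    by apply: le_trans wP _; rewrite lerDr (le_trans _ uy).
  by apply: le_trans (uS _ _) _; rewrite ?y'0 ?(le_trans y'y yt) // lerDl.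
apply: le_trans (norm_le_residual (g y) (u y) (w y) b c) _; rewrite -addrA lerD2l.
rewrite mulrDl; apply: lerD; apply: ler_wpM2l => //.
by apply: le_trans uy _; rewrite lerDl.
Qed.

Lemma edge_step (a A : R) : 0 < s -> 0 <= P -> 0 < h ->
  h * (`|b| + `|c|) <= 1 / 2 -> 0 <= a -> (1 + h) * (s + P) <= A ->
  (forall t, 0 <= t <= T -> t <= a -> `|u t| <= A) ->
  forall t, 0 <= t <= T -> t <= a + h -> `|u t| <= 3 * A.
Proof.
move=> s0 P0 h0 hB a0 hA IH t /andP[t0 tT] tah.
have A0 : 0 <= A by apply: le_trans _ hA; apply: mulr_ge0; lra.
have [ta|a_lt_t] := leP t a.
  apply: le_trans (IH t _ ta) _; first by rewrite t0 tT.
  lra.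
have cu : {within `[0, t], continuous (fun y => `|u y|)}.
  apply: (@continuous_subspaceW _ _ _ `[0, T]).
    by apply: subset_itvl; rewrite bnd_simp.
  move=> y; apply: continuous_comp; first exact: (weak_deriv_continuous T0 ug).
  exact: norm_continuous.
(* Let |u| peak on [0, t] at xs > a.  On [a, xs] the residual bounds |u'| by
   |res| + L with L h <= (S + P) / 2, so the growth since a is absorbed. *)
have [xs /[!in_itv] /= /andP[xs0 xst] xs_max] := EVT_max t0 cu.
have S_max y : 0 <= y <= t -> `|u y| <= `|u xs|.
  by move=> yt; apply: xs_max; rewrite in_itv.
apply: le_trans (S_max t _) _; first by rewrite t0 lexx.
have xsT : xs <= T by exact: le_trans tT.
have [xsa|axs] := leP xs a.
  apply: le_trans (IH xs _ xsa) _; first by rewrite xs0 xsT.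
  lra.
set S := `|u xs| in S_max *.
have S0 : 0 <= S by rewrite /S.
set L := (`|b| + `|c|) * (S + P).
have L0 : 0 <= L by rewrite mulr_ge0 //; lra.
have hg y : a <= y <= xs -> `|g y| <= `|res y| + L.
  case/andP=> ay yxs; apply: (deriv_le_residual P0 tT S_max).
  by rewrite (le_trans a0 ay) (le_trans yxs xst).
have := increment_le_residual s0 a0 (ltW axs) xsT L0 hg.
have ua : `|u a| <= A by apply: IH; rewrite ?a0 ?lexx ?(le_trans (ltW axs) xsT).
have Lh : L * h <= (S + P) / 2.
  rewrite /L mulrC mulrA; apply: le_trans (ler_wpM2r _ hB) _; lra.
have : (s / 2 + L) * (xs - a) <= (s / 2 + L) * h by apply: ler_wpM2l; lra.
have := ler_normD (u a) (u xs - u a); rewrite addrC subrK -/S.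
nra.
Qed.

Lemma edge_sup_pow n : 0 < s -> 0 <= P -> 0 < h ->
  h * (`|b| + `|c|) <= 1 / 2 -> `|u 0| <= P ->
  forall t, 0 <= t <= T -> t <= n%:R * h -> `|u t| <= 3 ^+ n * ((1 + h) * (s + P)).
Proof.
move=> s0 P0 h0 hB u0; elim: n => [|n IH] t /andP[t0 tT] tn.
  rewrite mul0r in tn; have -> : t = 0 by apply/eqP; rewrite eq_le tn t0.
  by rewrite expr0 mul1r (le_trans u0) //; nra.
rewrite exprS -mulrA; apply: (edge_step s0 P0 h0 hB _ _ IH) => //.
- by rewrite mulr_ge0 // ltW.
- by rewrite -[leLHS]mul1r ler_wpM2r ?mulr_ge0 ?exprn_ege1 //; lra.
- by rewrite t0.
- by rewrite -nat1r mulrDl mul1r addrC in tn.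
Qed.

End EdgeStep.

Section EdgeEstimate.
Variables (R : realType) (T b c : R).
Local Notation mu := (@lebesgue_measure R).

(* [w] plays the delayed term: it is either controlled by the parent edge or a
   past value of [u] itself. *)
Definition edge_estimate (K : R) : Prop :=
  forall (u g w : R -> R) (s P : R),
  weak_deriv 0 T u g ->
  measurable_fun `[0, T] (fun y => g y + b * u y + c * w y) ->
  (\int[mu]_(y in `[0%R, T]%classic) ((g y + b * u y + c * w y) ^+ 2)%:E
     <= (s ^+ 2)%:E)%E ->
  0 < s -> 0 <= P -> `|u 0| <= P ->
  (forall t, 0 <= t <= T -> `|w t| <= P \/ exists2 t', 0 <= t' <= t & w t = u t') ->
  forall t, 0 <= t <= T -> `|u t| <= K * (s + P).

Lemma edge_estimate_le (K K' : R) : K <= K' -> edge_estimate K -> edge_estimate K'.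
Proof.
move=> KK' hK u g w s P ug mr hr s0 P0 u0 hw t tT.
by apply: le_trans (hK u g w s P ug mr hr s0 P0 u0 hw t tT) _; rewrite ler_wpM2r //; lra.
Qed.

Lemma edge_estimate_exists : 0 <= T -> exists2 K, 0 <= K & edge_estimate K.
Proof.
move=> T0; set B := `|b| + `|c|; set h := (2 * B + 1)^-1.
have B0 : 0 <= B by rewrite addr_ge0.
have h0 : 0 < h by rewrite invr_gt0; lra.
have hB : h * B <= 1 / 2.
  have : h * (2 * B + 1) = 1 by rewrite mulVf // gt_eqF //; lra.
  lra.
set N := Num.Def.archi_bound (T / h).
have TN : T <= N%:R * h.
  by rewrite -ler_pdivrMr //; apply/ltW/archi_boundP; rewrite divr_ge0 // ltW.
exists (3 ^+ N * (1 + h)); first by rewrite mulr_ge0 ?exprn_ge0 //; lra.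
move=> u g w s P ug mr hr s0 P0 u0 hw t /andP[t0 tT].
rewrite -mulrA; apply: (edge_sup_pow (n := N) T0 ug mr hr hw s0 P0 h0 hB u0).
- by rewrite t0.
- exact: le_trans TN.
Qed.

End EdgeEstimate.

Lemma finite_uniform_bound (disp : Order.disp_t) (X : orderType disp) (x0 : X)
    (Q : nat -> X -> Prop) (m : nat) :
  (forall j x y, (x <= y)%O -> Q j x -> Q j y) ->
  (forall j, (1 <= j <= m)%N -> exists x, Q j x) ->
  exists2 x, (x0 <= x)%O & forall j, (1 <= j <= m)%N -> Q j x.
Proof.
move=> Qmono; elim: m => [|m IH] hQ.
  by exists x0 => // j /andP[j1 /(leq_trans j1)].
have [x1 x01 hx1] : exists2 x, (x0 <= x)%O & forall j, (1 <= j <= m)%N -> Q j x.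
  by apply: IH => j /andP[j1 jm]; apply: hQ; rewrite j1 ltnW.
have [x2 hx2] := hQ m.+1 (leqnn _).
exists (Order.max x1 x2); first by rewrite le_max x01.
move=> j /andP[j1]; rewrite leq_eqVlt => /predU1P[->|jm].
  by apply: Qmono hx2; rewrite le_max lexx orbT.
by apply: Qmono (hx1 j _); rewrite ?le_max ?lexx // j1.
Qed.

Lemma tree_d_le_m m d k : tree_data m d k -> (d <= m)%N.
Proof.
case=> [_ [_ [_ [_ hs]]]].
have sub : {subset iota 1 d <= map k (iota 1 m)}.
  move=> i; rewrite mem_iota add1n ltnS => hi.
  have [j [hj <-]] := hs i hi.
  by apply: map_f; rewrite mem_iota add1n ltnS.
by have := uniq_leq_size (iota_uniq 1 d) sub; rewrite size_iota size_map size_iota.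
Qed.

Lemma tree_parent_edge m d k j : tree_data m d k -> (2 <= j <= m)%N -> (1 <= k j <= m)%N.
Proof.
move=> td /(proj1 (proj2 (proj2 td))) /andP[k1 kd].
by rewrite k1 (leq_trans kd (tree_d_le_m td)).
Qed.

Lemma tree_depth_bound m d k : tree_data m d k ->
  exists N, forall j, (1 <= j <= m)%N -> exists2 n, (n <= N)%N & iter n k j = 0%N.
Proof.
case=> [_ [_ [_ [hroot _]]]].
suff [N _ hN] : exists2 N : nat, (0%N <= N)%O &
    forall j, (1 <= j <= m)%N -> exists2 n, (n <= N)%N & iter n k j = 0%N.
  by exists N.
apply: (@finite_uniform_bound _ _ 0%N
    (fun j N => exists2 n, (n <= N)%N & iter n k j = 0%N))
  => [j N N' NN' [n nN hn]|j /hroot [n hn]].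
- by exists n => //; exact: leq_trans NN'.
- by exists n, n.
Qed.

Section ExtendedSums.
Variable R : realType.
Local Open Scope ereal_scope.

Lemma lee_sum_nat_term (F : nat -> \bar R) (m j : nat) :
  (forall i, 0 <= F i) -> (1 <= j <= m)%N -> F j <= \sum_(1 <= i < m.+1) F i.
Proof.
move=> F0 jm; rewrite (bigD1_seq j) ?mem_index_iota ?iota_uniq //=.
by apply: leeDl; exact: sume_ge0.
Qed.

Lemma lee_sum_nat_split (F G : nat -> \bar R) (Z : nat -> R) (m : nat) :
  (forall i, (1 <= i <= m)%N -> F i <= G i + G i + (Z i)%:E) ->
  \sum_(1 <= i < m.+1) F i <= \sum_(1 <= i < m.+1) G i + \sum_(1 <= i < m.+1) G i
     + (\sum_(1 <= i < m.+1) Z i)%:E.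
Proof.
move=> hF; rewrite -sumEFin -!big_split /= big_nat_cond [leRHS]big_nat_cond.
by apply: lee_sum => i /andP[/andP[i1 im] _]; apply: hF; rewrite i1.
Qed.

Lemma lee_of_sqr_bounds (X J : \bar R) (Z : R) : 0 <= J -> (0 <= Z)%R ->
  (forall s, (0 < s)%R -> J <= (s ^+ 2)%:E -> X <= J + J + (Z * s ^+ 2)%:E) ->
  X <= (2 + Z)%:E * J.
Proof.
move=> J0 Z0 hX.
have [Jfin|Jinf] := boolP (J \is a fin_num); last first.
  have -> : J = +oo by apply/eqP; rewrite -leye_eq leNgt -ge0_fin_numE.
  by rewrite gt0_muley ?leey // lte_fin; lra.
rewrite -(fineK Jfin) -EFinM; set F := fine J.
have F0 : (0 <= F)%R by rewrite -lee_fin fineK.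
apply/lee_addgt0Pr => e e0.
set e' := (e / (Z + 1))%R.
have e'0 : (0 < e')%R by rewrite divr_gt0 //; lra.
have Ze' : (Z * e' <= e)%R.
  rewrite /e' mulrA ler_pdivrMr; last by lra.
  lra.
have Fe0 : (0 <= F + e')%R by lra.
apply: le_trans (hX (Num.sqrt (F + e')) _ _) _.
- by rewrite sqrtr_gt0; lra.
- by rewrite sqr_sqrtr // -(fineK Jfin) lee_fin lerDl ltW.
rewrite sqr_sqrtr // -(fineK Jfin) -!EFinD lee_fin.
rewrite -/F; lra.
Qed.

End ExtendedSums.

Lemma energy_le_residual (R : realType) (T b c M : R) (u g w : R -> R) :
  0 <= T -> 0 <= M ->
  measurable_fun `[0, T] u -> measurable_fun `[0, T] g ->
  measurable_fun `[0, T] (fun y => g y + b * u y + c * w y) ->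
  (forall t, 0 <= t <= T -> `|u t| <= M) ->
  (forall t, 0 <= t <= T -> `|w t| <= M) ->
  (\int[lebesgue_measure]_(t in `[0%R, T]%classic) ((u t) ^+ 2 + (g t) ^+ 2)%:E <=
   \int[lebesgue_measure]_(t in `[0%R, T]%classic) ((g t + b * u t + c * w t) ^+ 2)%:E
   + \int[lebesgue_measure]_(t in `[0%R, T]%classic) ((g t + b * u t + c * w t) ^+ 2)%:E
   + (T * (M ^+ 2 + 2 * ((`|b| + `|c|) * M) ^+ 2))%:E)%E.
Proof.
move=> T0 M0 mfu mfg mfr hu hw.
set C := M ^+ 2 + 2 * ((`|b| + `|c|) * M) ^+ 2.
have C0 : 0 <= C by rewrite addr_ge0 ?mulr_ge0 ?sqr_ge0.
have mi : measurable `[0, T] by exact: measurable_itv.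
set r2 := fun t => ((g t + b * u t + c * w t) ^+ 2)%:E.
have r20 t : `[0, T]%classic t -> (0 <= r2 t)%E by rewrite lee_fin sqr_ge0.
have mr2 : measurable_fun `[0, T] r2 by apply/measurable_EFinP; exact: measurable_funX.
have cst0 t : `[0, T]%classic t -> (0 <= (cst C%:E : R -> \bar R) t)%E by rewrite lee_fin.
have -> : ((T * C)%:E = \int[lebesgue_measure]_(t in `[0%R, T]%classic) (cst C%:E) t)%E.
  rewrite integral_cst // mulrC EFinM; congr (_ * _)%E.
  exact: esym (etrans (lebesgue_measure_itv_cc T0) (congr1 EFin (subr0 T))).
rewrite -(ge0_integralD lebesgue_measure mi r20 mr2 r20 mr2).
rewrite -(ge0_integralD lebesgue_measure mi _ (emeasurable_funD mr2 mr2) cst0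
    (measurable_cst _)); last by move=> t ht; rewrite adde_ge0 ?r20.
apply: ge0_le_integral => //.
- by move=> t _; rewrite lee_fin addr_ge0 // sqr_ge0.
- by apply/measurable_EFinP; apply: measurable_funD; exact: measurable_funX.
- by apply: emeasurable_funD => //; exact: emeasurable_funD.
move=> t; rewrite /= in_itv /= => ht; rewrite /r2 -!EFinD lee_fin.
set f := g t + b * u t + c * w t.
have hg : `|g t| <= `|f| + (`|b| + `|c|) * M.
  apply: le_trans (norm_le_residual (g t) (u t) (w t) b c) _.
  by rewrite -addrA lerD2l mulrDl lerD // ler_wpM2l // ?hu ?hw.
have hu2 : u t ^+ 2 <= M ^+ 2.
  by rewrite -real_normK ?num_real // ler_pXn2r ?nnegrE ?hu.
have hg2 : g t ^+ 2 <= (`|f| + (`|b| + `|c|) * M) ^+ 2.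
  by rewrite -real_normK ?num_real // ler_pXn2r ?nnegrE ?addr_ge0 ?mulr_ge0.
have := sqr_ge0 (`|f| - (`|b| + `|c|) * M).
rewrite -[f ^+ 2]real_normK ?num_real // /C.
nra.
Qed.

Lemma measurable_fun_shift (R : realType) (D F : set R) (u : R -> R) (r : R) :
  measurable D -> measurable F -> measurable_fun F u ->
  (forall t, D t -> F (t + r)) -> measurable_fun D (fun t => u (t + r)).
Proof.
move=> mD mF mu DF; apply: (measurable_comp mF _ mu) => //.
- by move=> _ [t Dt <-]; exact: DF.
- exact: measurable_funD.
Qed.

Definition depth_const (R : realType) (K : R) (n : nat) : R :=
  iter n (fun x => K * (1 + x)) 0.

Lemma depth_const_ge0 (R : realType) (K : R) n : 0 <= K -> 0 <= depth_const K n.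
Proof.
move=> K0; elim: n => [|n IH] //=.
by rewrite mulr_ge0 // addr_ge0.
Qed.

Lemma depth_const_le (R : realType) (K : R) n n' : 0 <= K -> (n <= n')%N ->
  depth_const K n <= depth_const K n'.
Proof.
move=> K0 nn'; apply: ((nondecreasing_seqP (depth_const K)).1 _ _ _ nn') => {nn'} n.
elim: n => [|n IH] /=; first by rewrite mulr_ge0 // addr_ge0.
by rewrite ler_wpM2l // lerD2l.
Qed.

Section Tree.
Variables (R : realType) (m d : nat) (k : nat -> nat) (T : nat -> R) (tau : R).
Variables (b c : nat -> R) (v g : nat -> R -> R).
Local Notation mu := (@lebesgue_measure R).
Hypothesis td : tree_data m d k.
Hypothesis tau_ge0 : 0 <= tau.
Hypothesis tau_lt_T : forall j, (1 <= j <= m)%N -> tau < T j.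
Hypothesis vW : in_W m d k T tau v.
Hypothesis vg : forall j, (1 <= j <= m)%N -> weak_deriv 0 (T j) (v j) (g j).

Let T_ge0 j : (1 <= j <= m)%N -> 0 <= T j.
Proof. by move=> hj; rewrite (le_trans tau_ge0) // ltW // tau_lt_T. Qed.

Let non_root_edge j : (1 <= j <= m)%N -> j != 1%N -> (2 <= j <= m)%N.
Proof. by case/andP=> j1 jm j_neq1; rewrite jm andbT ltn_neqAle eq_sym j_neq1. Qed.

Lemma delayed_measurable j : (1 <= j <= m)%N ->
  measurable_fun `[0, T j] (delayed k T tau v j).
Proof.
move=> hj; have tau0 := tau_ge0; have tauj := tau_lt_T hj.
have [j1|j_neq1] := eqVneq j 1%N.
  rewrite j1 in tauj *; case: vW => [[g1 vg1] _].
  have mv1 : measurable_fun `[- tau, T 1%N] (v 1%N).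
    by apply: weak_deriv_measurable vg1; lra.
  apply: eq_measurable_fun (measurable_fun_shift (r := - tau) _ _ mv1 _) => //.
  - by move=> t _; rewrite /delayed eqxx andbF.
  - by move=> t /=; rewrite !in_itv /= => /andP[? ?]; apply/andP; split; lra.
have hk := tree_parent_edge td (non_root_edge hj j_neq1).
have tauk := tau_lt_T hk.
rewrite (@itv_bndbnd_setU _ _ (BLeft 0) (BLeft tau) (BRight (T j))); last 2 first.
- by rewrite bnd_simp.
- by rewrite bnd_simp ltW.
apply/measurable_funU => //; split.
  apply: eq_measurable_fun (measurable_fun_shift (r := T (k j) - tau) _ _
      (weak_deriv_measurable (T_ge0 hk) (vg hk)) _) => //.
  - move=> t; rewrite inE /= in_itv /= => /andP[t0 t_tau].
    rewrite /delayed j_neq1 andbT (_ : t - tau < 0); last by lra.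
    by congr (v (k j)); ring.
  - by move=> t /=; rewrite !in_itv /= => /andP[? ?]; apply/andP; split; lra.
apply: eq_measurable_fun (measurable_fun_shift (r := - tau) _ _
    (weak_deriv_measurable (T_ge0 hj) (vg hj)) _) => //.
- move=> t; rewrite inE /= in_itv /= => /andP[tau_t tT].
  by rewrite /delayed j_neq1 andbT ltNge subr_ge0 tau_t.
- by move=> t /=; rewrite !in_itv /= => /andP[? ?]; apply/andP; split; lra.
Qed.

Lemma ell_measurable j : (1 <= j <= m)%N ->
  measurable_fun `[0, T j] (ell k T tau b c v g j).
Proof.
move=> hj; have [mg _] := vg hj.
apply: measurable_funD; first apply: measurable_funD => //.
- exact: measurable_funM (weak_deriv_measurable (T_ge0 hj) (vg hj)).
- exact: measurable_funM (delayed_measurable hj).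
Qed.

Section ParentBound.
Variables (j : nat) (P : R).
Hypothesis hj : (1 <= j <= m)%N.
Hypothesis parent_le : j != 1%N -> forall t, 0 <= t <= T (k j) -> `|v (k j) t| <= P.

Lemma start_le : 0 <= P -> `|v j 0| <= P.
Proof.
case: vW => [_ [_ [v_cont [_ v1_0]]]] P0.
have [->|j_neq1] := eqVneq j 1%N.
  by rewrite v1_0 ?normr0 // lexx oppr_le0 tau_ge0.
have hj2 := non_root_edge hj j_neq1.
rewrite v_cont //; apply: parent_le => //.
by rewrite lexx T_ge0 // (tree_parent_edge td hj2).
Qed.

Lemma delayed_le_or_past : 0 <= P -> forall t, 0 <= t <= T j ->
  `|delayed k T tau v j t| <= P \/
  exists2 t', 0 <= t' <= t & delayed k T tau v j t = v j t'.
Proof.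
case: vW => [_ [_ [_ [_ v1_0]]]] P0 t /andP[t0 tT].
have tau0 := tau_ge0.
have [t_tau|tau_t] := ltP (t - tau) 0; last first.
  right; exists (t - tau); first by apply/andP; split; lra.
  by rewrite /delayed ltNge tau_t.
left; have [j1|j_neq1] := eqVneq j 1%N.
  by rewrite /delayed j1 eqxx andbF v1_0 ?normr0 //; apply/andP; split; lra.
have hk := tree_parent_edge td (non_root_edge hj j_neq1).
have tauk := tau_lt_T hk.
rewrite /delayed t_tau j_neq1; apply: parent_le => //.
by apply/andP; split; lra.
Qed.

End ParentBound.

Lemma tree_sup_bound (K s : R) n : 0 <= K ->
  (forall j, (1 <= j <= m)%N -> edge_estimate (T j) (b j) (c j) K) -> 0 < s ->
  (forall j, (1 <= j <= m)%N ->
     (\int[mu]_(t in `[0%R, T j]%classic) ((ell k T tau b c v g j t) ^+ 2)%:E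
        <= (s ^+ 2)%:E)%E) ->
  forall j, (1 <= j <= m)%N -> iter n k j = 0%N ->
  forall t, 0 <= t <= T j -> `|v j t| <= depth_const K n * s.
Proof.
move=> K0 hK s0 hs; elim: n => [|n IH] j hj jn.
  by move: hj; rewrite /= in jn; rewrite jn.
move=> t tT.
have Ps0 : 0 <= depth_const K n * s by rewrite mulr_ge0 ?depth_const_ge0 // ltW.
have parent_le : j != 1%N -> forall t, 0 <= t <= T (k j) ->
    `|v (k j) t| <= depth_const K n * s.
  move=> j_neq1; apply: IH; last by rewrite -iterSr.
  exact: tree_parent_edge td (non_root_edge hj j_neq1).
apply: le_trans (hK j hj _ _ _ _ _ (vg hj) (ell_measurable hj) (hs j hj) s0 Ps0
  (start_le hj parent_le Ps0) (delayed_le_or_past hj parent_le Ps0) t tT) _.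
by rewrite [leRHS](_ : _ = K * (s + depth_const K n * s)) // /depth_const iterS; ring.
Qed.

Definition energy_const (E : R) : R :=
  \sum_(1 <= j < m.+1) T j * (E ^+ 2 + 2 * ((`|b j| + `|c j|) * E) ^+ 2).

Lemma energy_const_ge0 E : 0 <= energy_const E.
Proof.
rewrite /energy_const big_seq; apply: sumr_ge0 => j.
rewrite mem_index_iota ltnS => hj.
by rewrite mulr_ge0 ?T_ge0 // addr_ge0 ?sqr_ge0 // mulr_ge0 ?sqr_ge0.
Qed.

Lemma normW2_le_Jfun (K : R) N : 0 <= K ->
  (forall j, (1 <= j <= m)%N -> edge_estimate (T j) (b j) (c j) K) ->
  (forall j, (1 <= j <= m)%N -> exists2 n, (n <= N)%N & iter n k j = 0%N) ->
  forall s, 0 < s -> (Jfun m k T tau b c v g <= (s ^+ 2)%:E)%E ->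
  (normW2 m T v g <= Jfun m k T tau b c v g + Jfun m k T tau b c v g
     + (energy_const (depth_const K N) * s ^+ 2)%:E)%E.
Proof.
move=> K0 hK hN s s0 Js; set E := depth_const K N.
have Es0 : 0 <= E * s by rewrite mulr_ge0 ?depth_const_ge0 // ltW.
have ell_le j : (1 <= j <= m)%N ->
    (\int[mu]_(t in `[0%R, T j]%classic) ((ell k T tau b c v g j t) ^+ 2)%:E
       <= (s ^+ 2)%:E)%E.
  move=> hj; apply: le_trans Js; apply: (lee_sum_nat_term _ hj) => i.
  by apply: integral_ge0 => t _; rewrite lee_fin sqr_ge0.
have v_le j : (1 <= j <= m)%N -> forall t, 0 <= t <= T j -> `|v j t| <= E * s.
  move=> hj t tT; have [n nN jn] := hN j hj.
  apply: le_trans (tree_sup_bound K0 hK s0 ell_le hj jn tT) _.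
  by apply: ler_wpM2r; [exact: ltW | exact: depth_const_le].
have -> : energy_const E * s ^+ 2 = \sum_(1 <= j < m.+1)
    T j * ((E * s) ^+ 2 + 2 * ((`|b j| + `|c j|) * (E * s)) ^+ 2).
  by rewrite mulr_suml; apply: eq_bigr => j _; ring.
apply: lee_sum_nat_split => j hj.
have parent_le : j != 1%N -> forall t, 0 <= t <= T (k j) -> `|v (k j) t| <= E * s.
  by move=> j_neq1; apply: v_le; exact: tree_parent_edge td (non_root_edge hj j_neq1).
apply: energy_le_residual (ell_measurable hj) (v_le j hj) _ => //.
- exact: T_ge0.
- exact: weak_deriv_measurable (T_ge0 hj) (vg hj).
- by case: (vg hj).
- move=> t tT; have [//|[t' /andP[t'0 t't] ->]] := delayed_le_or_past hj parent_le Es0 tT.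
  by apply: v_le hj _ _; rewrite t'0 (le_trans t't) //; case/andP: tT.
Qed.

End Tree.

Theorem lemma6 (R : realType) (m d : nat) (k : nat -> nat) (T : nat -> R)
  (tau : R) (b c : nat -> R) :
  tree_data m d k ->
  (forall j, (1 <= j <= m)%N -> 0 < T j) ->
  0 <= tau ->
  (forall j, (1 <= j <= m)%N -> tau < T j) ->
  exists C1 : R, 0 < C1 /\
    forall v : nat -> R -> R, in_W m d k T tau v ->
    forall g : nat -> R -> R,
      (forall j, (1 <= j <= m)%N -> weak_deriv 0 (T j) (v j) (g j)) ->
      (C1%:E * normW2 m T v g <= Jfun m k T tau b c v g)%E.
Proof.
move=> td T_gt0 tau0 tauT.
have [K K0 hK] : exists2 K, 0 <= K &
    forall j, (1 <= j <= m)%N -> edge_estimate (T j) (b j) (c j) K.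
  apply: (@finite_uniform_bound _ _ 0 (fun j => edge_estimate (T j) (b j) (c j)))
    => [j K K'|j hj]; first exact: edge_estimate_le.
  by have [K _ hK] := edge_estimate_exists (b j) (c j) (ltW (T_gt0 j hj)); exists K.
have [N hN] := tree_depth_bound td.
set Z := energy_const m T b c (depth_const K N).
have Z0 : 0 <= Z by exact: energy_const_ge0 tau0 tauT _.
exists (2 + Z)^-1; split; first by rewrite invr_gt0; lra.
move=> v vW g vg.
have J0 : (0 <= Jfun m k T tau b c v g)%E.
  by apply: sume_ge0 => j _; apply: integral_ge0 => t _; rewrite lee_fin sqr_ge0.
have C0 : (0 <= ((2 + Z)^-1)%:E)%E by rewrite lee_fin invr_ge0; lra.
apply: le_trans (lee_wpmul2l C0 (lee_of_sqr_bounds J0 Z0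
  (normW2_le_Jfun td tau0 tauT vW vg K0 hK hN))) _.
by rewrite muleA -EFinM mulVf ?mul1e // gt_eqF //; lra.
Qed.
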